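(* Let $X$ and $Y$ be finite $T_0$-spaces. If $X$ is homotopy equivalent to $Y$, then $\overline{\mathrm{rank}}(X)=\overline{\mathrm{rank}}(Y)$, where $\overline{\mathrm{rank}}(X):=|X|-\mathrm{rank}(X_M)$.
   Context: A finite $T_0$-space is identified with a finite poset via $x\le y$ iff $U_x\subseteq U_y$, where $U_x$ is the minimal open set containing $x$. For a labelling $X=\{x_1,\dots,x_n\}$, $X_M=(x_{i,j})$ is the $n\times n$ matrix with $x_{i,j}=0$ if $x_i\le x_j$ and $x_{i,j}=1$ otherwise; its rank (as a real matrix) does not depend on the labelling. *)

From HB Require Import structures.
From mathcomp Require Import all_boot all_order all_algebra.
From mathcomp Require Import reals.
Set Implicit Arguments. Unset Strict Implicit. Unset Printing Implicit Defensive.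
Import Order.TTheory GRing.Theory Num.Theory.

(* On a finite type, arbitrary unions are unions of subfamilies of O,
   and arbitrary intersections of open sets reduce to finite ones. *)
Definition is_topology (T : finType) (O : {set {set T}}) : Prop :=
  [/\ set0 \in O, [set: T] \in O,
      (forall F : {set {set T}}, F \subset O -> \bigcup_(A in F) A \in O)
    & (forall A B, A \in O -> B \in O -> A :&: B \in O)].

Definition is_T0 (T : finType) (O : {set {set T}}) : Prop :=
  forall x y : T, x != y -> exists2 U, U \in O & (x \in U) != (y \in U).

Definition finT0space (T : finType) (O : {set {set T}}) : Prop :=
  is_topology O /\ is_T0 O.

Definition continuousF (X Y : finType) (OX : {set {set X}}) (OY : {set {set Y}})
  (f : X -> Y) : Prop :=
  forall V, V \in OY -> f @^-1: V \in OX.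

Local Open Scope ring_scope.

(* Continuity of H : X x [0,1] -> Y, with X x [0,1] carrying the product
   topology of (X, OX) and the subspace topology of [0,1] in R:
   preimages of open sets are open in X x [0,1] (basic opens U x (ball /\ [0,1])). *)
Definition continuousH (R : realType) (X Y : finType) (OX : {set {set X}})
  (OY : {set {set Y}}) (H : X -> R -> Y) : Prop :=
  forall V, V \in OY ->
    forall x (t : R), 0 <= t <= 1 -> H x t \in V ->
      exists2 U, U \in OX & x \in U /\
        exists2 e : R, 0 < e &
          forall x' t', x' \in U -> 0 <= t' <= 1 -> `|t' - t| < e -> H x' t' \in V.

Definition homotopic (R : realType) (X Y : finType) (OX : {set {set X}})
  (OY : {set {set Y}}) (f g : X -> Y) : Prop :=
  exists H : X -> R -> Y, [/\ continuousH OX OY H,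
     (forall x, H x 0 = f x) & (forall x, H x 1 = g x)].

Definition homotopy_equivalent (R : realType) (X Y : finType)
  (OX : {set {set X}}) (OY : {set {set Y}}) : Prop :=
  exists (f : X -> Y) (g : Y -> X),
    [/\ continuousF OX OY f, continuousF OY OX g,
        homotopic R OX OX (g \o f) id & homotopic R OY OY (f \o g) id].

Definition minimal_open (T : finType) (O : {set {set T}}) (x : T) : {set T} :=
  \bigcap_(U in O | x \in U) U.

Definition fle (T : finType) (O : {set {set T}}) (x y : T) : bool :=
  minimal_open O x \subset minimal_open O y.

Definition XM (R : realType) (T : finType) (O : {set {set T}}) : 'M[R]_#|T| :=
  \matrix_(i < #|T|, j < #|T|)
     (if fle O (enum_val i) (enum_val j) then 0 else 1).

Definition rankbar (R : realType) (T : finType) (O : {set {set T}}) : nat :=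
  (#|T| - \rank (XM R O))%N.

From mathcomp Require Import all_boot all_order all_algebra.
From mathcomp Require Import reals.
From mathcomp Require Import lra zify.
From Stdlib Require Import Relation_Operators Classical.
Set Implicit Arguments. Unset Strict Implicit. Unset Printing Implicit Defensive.
Import Order.TTheory GRing.Theory Num.Theory.
Local Open Scope ring_scope.

(* Order X by specialization and let n = |X|.  Then X_M = J - Z, where J is
   the all-ones matrix and Z the zeta matrix of the poset, which is
   invertible; so rank(X_M) >= n - 1, and rank-bar(X) = 1 exactly when some
   nonzero u has u X_M = 0.  After rescaling, such a u is a system of weights
   v with sum_(w <= z) v w = 1 for every z and total weight 1: the Euler
   characteristic of X is 1.  This property survives the removal of beat
   points and transfers along isomorphisms.  A homotopy between maps of
   finite spaces gives a fence of pointwise comparable monotone maps (a sup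
   argument on [0, 1]), and by Stong's theorem a self-map of a core (a space
   without beat points) fenced to the identity is the identity.  Hence
   homotopy equivalent spaces have isomorphic cores, and each space reaches
   its core by removing beat points. *)

#[local] Arguments clos_refl_trans {A} R x _.
#[local] Arguments rt_step {A R x y}.
#[local] Arguments rt_refl {A R x}.
#[local] Arguments rt_trans {A R x y z}.

(** * Fences of comparable maps *)

Definition comparable_homs (A B : Type) (leA : rel A) (leB : rel B) (k l : A -> B) :=
  [/\ {homo k : x y / leA x y >-> leB x y}, {homo l : x y / leA x y >-> leB x y}
    & (forall x, leB (k x) (l x)) \/ (forall x, leB (l x) (k x))].

Notation fence leA leB := (clos_refl_trans (comparable_homs leA leB)).

Lemma comparable_homsC (A B : Type) (leA : rel A) (leB : rel B) (k l : A -> B) :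
  comparable_homs leA leB k l -> comparable_homs leA leB l k.
Proof. by case=> k_homo l_homo [kl|lk]; split=> //; [right|left]. Qed.

Lemma comparable_homs_eqfun (A B : Type) (leA : rel A) (leB : rel B) (k l : A -> B) :
  reflexive leB -> {homo k : x y / leA x y >-> leB x y} -> k =1 l ->
  comparable_homs leA leB k l.
Proof.
move=> leB_refl k_homo kl; split=> // [x y|]; first by rewrite -!kl; apply: k_homo.
by left => x; rewrite kl.
Qed.

Lemma clos_refl_trans_map (A B : Type) (r : A -> A -> Prop) (s : B -> B -> Prop)
    (F : A -> B) :
  (forall a b, r a b -> s (F a) (F b)) ->
  forall a b, clos_refl_trans r a b -> clos_refl_trans s (F a) (F b).
Proof.
move=> rs a b; elim=> [x y /rs|x|x y z _ Fxy _ Fyz]; first exact: rt_step.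
  exact: rt_refl.
exact: rt_trans Fxy Fyz.
Qed.

Lemma fence_comp (A B C D : Type) (leA : rel A) (leB : rel B) (leC : rel C)
    (leD : rel D) (p : A -> B) (q : C -> D) (k l : B -> C) :
  {homo p : x y / leA x y >-> leB x y} -> {homo q : x y / leC x y >-> leD x y} ->
  fence leB leC k l -> fence leA leD (q \o k \o p) (q \o l \o p).
Proof.
move=> p_homo q_homo; apply: (clos_refl_trans_map (F := fun k => q \o k \o p)).
move=> k' l' [k'_homo l'_homo cmp].
split=> [x y /p_homo/k'_homo/q_homo|x y /p_homo/l'_homo/q_homo|] //.
by case: cmp => c; [left|right] => x; apply: q_homo.
Qed.

(** * Beat points and Stong's theorem *)

Definition down_beat (T : finType) (le : rel T) (S : {set T}) (x y : T) :=
  [/\ x \in S, y \in S, y != x, le y x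
    & forall z, z \in S -> z != x -> le z x -> le z y].

Definition up_beat (T : finType) (le : rel T) := down_beat (fun x y => le y x).

Definition beat_free (T : finType) (le : rel T) (S : {set T}) :=
  forall x y, ~ down_beat le S x y /\ ~ up_beat le S x y.

Section PosetInduction.
Variables (T : finType) (le : rel T).
Hypotheses (le_refl : reflexive le) (le_anti : antisymmetric le)
  (le_trans : transitive le).

Lemma poset_ind (P : T -> Prop) :
  (forall x, (forall z, z != x -> le z x -> P z) -> P x) -> forall x, P x.
Proof.
move=> IH; suff: forall n x, (#|[set w | le w x]| < n)%N -> P x.
  by move=> + x; apply.
elim=> // n IHn x; rewrite ltnS => le_x; apply: IH => z zx zlex; apply: IHn.
apply: leq_trans le_x; apply: proper_card; rewrite properE; apply/andP; split.
  by apply/subsetP=> w; rewrite !inE => /le_trans; apply.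
apply/subsetPn; exists x; rewrite !inE ?le_refl //=.
by apply: contra zx => xlez; apply/eqP/le_anti; rewrite zlex.
Qed.

Lemma beat_free_below_fixed (C : {set T}) (k : T -> T) :
  beat_free le C -> {in C, forall x, k x \in C} ->
  {in C &, {homo k : x y / le x y}} ->
  {in C, forall x, le (k x) x} -> {in C, forall x, k x = x}.
Proof.
move=> nbC kC k_homo kle x; elim/poset_ind: x => x IH xC.
have [//|kx] := eqVneq (k x) x; have [not_down _] := nbC x (k x).
(* otherwise x would be a down beat point with partner k x *)
exfalso; apply: not_down; split=> //; [exact: kC | exact: kle |].
by move=> z zC zx zlex; rewrite -(IH z zx zlex zC); apply: k_homo.
Qed.

End PosetInduction.

Lemma beat_free_comparable_fixed (T : finType) (le : rel T) (C : {set T})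
    (k : T -> T) :
  reflexive le -> antisymmetric le -> transitive le -> beat_free le C ->
  {in C, forall x, k x \in C} -> {in C &, {homo k : x y / le x y}} ->
  {in C, forall x, le (k x) x} \/ {in C, forall x, le x (k x)} ->
  {in C, forall x, k x = x}.
Proof.
move=> le_refl le_anti le_trans nbC kC k_homo [kle|kge].
  exact: beat_free_below_fixed.
apply: (@beat_free_below_fixed _ (fun x y => le y x)) => //.
- by move=> x y /andP[yx xy]; apply: le_anti; rewrite xy yx.
- by move=> y x z yx zy; apply: le_trans zy yx.
- by move=> x y; have [] := nbC x y.
- by move=> x y xC yC; apply: k_homo.
Qed.

(** * Posets of Euler characteristic one *)

Section WeightSums.
Variables (R : pzRingType) (T : finType) (S : {set T}).

Lemma sum_in_pred_true (F : T -> R) :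
  \sum_(w in S | true) F w = \sum_(w in S) F w.
Proof. by apply: eq_bigl => w; rewrite andbT. Qed.

Lemma sum_setD1_pred (P : pred T) (F : T -> R) x : x \in S ->
  \sum_(w in S | P w) F w = (P x)%:R * F x + \sum_(w in S :\ x | P w) F w.
Proof.
move=> xS; rewrite !big_mkcondr (big_setD1 x) //=.
by case: (P x); rewrite ?mul1r ?mul0r ?add0r.
Qed.

Lemma sum_delta_pred (P : pred T) (c : R) y : y \in S ->
  \sum_(w in S | P w) (w == y)%:R * c = (P y)%:R * c.
Proof.
move=> yS; rewrite (sum_setD1_pred _ _ yS) eqxx mul1r big1 ?addr0 //.
by move=> w /andP[/setD1P[/negbTE-> _] _]; rewrite mul0r.
Qed.

End WeightSums.

(* The weights are forced (they are the Moebius inversion of the constant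
   function 1 on S) and their total is the Euler characteristic of S. *)
Definition euler_one (R : pzRingType) (T : finType) (le : rel T) (S : {set T}) :=
  exists2 v : T -> R, {in S, forall z, \sum_(w in S | le w z) v w = 1}
    & \sum_(w in S) v w = 1.

Lemma euler_oneT (R : pzRingType) (T : finType) (le : rel T) :
  euler_one R le setT <->
  exists2 v : T -> R, (forall z, \sum_(w | le w z) v w = 1) & \sum_w v w = 1.
Proof.
have sumT P (v : T -> R) : \sum_(w in setT | P w) v w = \sum_(w | P w) v w.
  by apply: eq_bigl => w; rewrite in_setT.
have sumT' (v : T -> R) : \sum_(w in setT) v w = \sum_w v w.
  by apply: eq_bigl => w; rewrite in_setT.
split=> -[v vdown vsum]; exists v; rewrite ?sumT' // in vsum *.
- by move=> z; rewrite -sumT vdown ?in_setT.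
- by move=> z _; rewrite sumT.
Qed.

Lemma euler_one_iso (R : pzRingType) (T U : finType) (leT : rel T) (leU : rel U)
    (CT : {set T}) (CU : {set U}) (F : T -> U) (G : U -> T) :
  {homo F : x y / leT x y >-> leU x y} -> {homo G : x y / leU x y >-> leT x y} ->
  {in CT, forall x, F x \in CU} -> {in CU, forall y, G y \in CT} ->
  {in CT, forall x, G (F x) = x} -> {in CU, forall y, F (G y) = y} ->
  euler_one R leT CT -> euler_one R leU CU.
Proof.
move=> F_homo G_homo FC GC GK FK [v vdown vsum].
have reindex_CU (P : pred U) :
    \sum_(w in CU | P w) v (G w) = \sum_(u in CT | P (F u)) v u.
  rewrite (reindex_onto F G) => [|w /andP[wC _]]; last exact: FK.
  apply: eq_big => [u|u /andP[_ /eqP->] //].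
  have [uC|uNC] := boolP (u \in CT); first by rewrite FC //= GK // eqxx andbT.
  by apply: contraNF uNC => /andP[/andP[FuC _] /eqP <-]; apply: GC.
exists (v \o G) => [z zC|]; last first.
  by rewrite -sum_in_pred_true /= reindex_CU sum_in_pred_true.
rewrite /= reindex_CU -(vdown _ (GC z zC)); apply: eq_bigl => u.
have [uC|//] := boolP (u \in CT); apply/idP/idP => [/G_homo|/F_homo].
  by rewrite GK.
by rewrite FK.
Qed.

Lemma euler_one_enum (R : pzRingType) (T : finType) (le : rel T) :
  euler_one R (fun i j : 'I_#|T| => le (enum_val i) (enum_val j)) setT <->
  euler_one R le setT.
Proof.
have le_enum_rank x y :
    le x y -> le (enum_val (enum_rank x)) (enum_val (enum_rank y)).
  by rewrite !enum_rankK.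
split; [apply: (euler_one_iso (F := enum_val) (G := enum_rank))
       |apply: (euler_one_iso (F := enum_rank) (G := enum_val))] => //;
  by move=> *; rewrite ?in_setT ?enum_valK ?enum_rankK.
Qed.

Section BeatInvariance.
Variables (R : pzRingType) (T : finType) (le : rel T).
Hypotheses (le_refl : reflexive le) (le_anti : antisymmetric le)
  (le_trans : transitive le).
Variables (S : {set T}) (x y : T).

Lemma euler_one_down_beat :
  down_beat le S x y -> euler_one R le (S :\ x) <-> euler_one R le S.
Proof.
case=> xS yS yx ylex below_x.
have xNley : le x y = false.
  by apply: contraNF yx => xley; apply/eqP/le_anti; rewrite ylex.
have le_x_y : {in S :\ x, forall w, le w x = le w y}.
  move=> w /setD1P[wx wS]; apply/idP/idP; first exact: below_x.
  by move/le_trans; apply.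
have sum_x_y (v : T -> R) :
    \sum_(w in S :\ x | le w x) v w = \sum_(w in S :\ x | le w y) v w.
  by apply: eq_bigl => w; case: (boolP (w \in S :\ x)) => //= /le_x_y.
split=> [[v vdown vsum]|[v vdown vsum]].
  pose v' w := if w == x then 0 else v w.
  have sum_v' P : \sum_(w in S | P w) v' w = \sum_(w in S :\ x | P w) v w.
    rewrite (sum_setD1_pred _ _ xS) /v' eqxx mulr0 add0r.
    by apply: eq_bigr => w /andP[/setD1P[/negbTE-> _] _].
  exists v' => [z zS|]; last first.
    by rewrite -sum_in_pred_true sum_v' sum_in_pred_true.
  rewrite sum_v'; have [->|zx] := eqVneq z x.
    by rewrite sum_x_y vdown // !inE yx.
  by apply: vdown; rewrite !inE zx.
have vx0 : v x = 0.
  have := vdown x xS; rewrite (sum_setD1_pred _ _ xS) sum_x_y.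
  have := vdown y yS; rewrite (sum_setD1_pred _ _ xS) xNley mul0r add0r => ->.
  by rewrite le_refl mul1r -[RHS]add0r => /addIr.
have sum_v P : \sum_(w in S :\ x | P w) v w = \sum_(w in S | P w) v w.
  by rewrite (sum_setD1_pred _ _ xS) vx0 mulr0 add0r.
exists v => [z /setD1P[zx zS]|]; first by rewrite sum_v vdown.
by rewrite -sum_in_pred_true sum_v sum_in_pred_true.
Qed.

Lemma euler_one_up_beat :
  up_beat le S x y -> euler_one R le (S :\ x) <-> euler_one R le S.
Proof.
case=> xS yS yx xley above_x.
have yS' : y \in S :\ x by rewrite !inE yx.
have yNlex : le y x = false.
  by apply: contraNF yx => ylex; apply/eqP/le_anti; rewrite ylex.
have le_x_y : {in S :\ x, forall z, le x z = le y z}.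
  move=> z /setD1P[zx zS]; apply/idP/idP; first exact: above_x.
  exact: le_trans.
split=> [[v vdown vsum]|[v vdown vsum]].
  (* give x the mass a its down-set lacks, taking it from y *)
  pose a := 1 - \sum_(w in S :\ x | le w x) v w.
  pose v' w := if w == x then a else v w - (w == y)%:R * a.
  have sum_v' P : \sum_(w in S | P w) v' w
      = (P x)%:R * a + (\sum_(w in S :\ x | P w) v w - (P y)%:R * a).
    rewrite (sum_setD1_pred _ _ xS) /v' eqxx -(sum_delta_pred P a yS') -sumrB.
    by congr (_ + _); apply: eq_bigr => w /andP[/setD1P[/negbTE-> _] _].
  exists v' => [z zS|].
    rewrite sum_v'; have [->|zx] := eqVneq z x.
      by rewrite yNlex le_refl mul0r mul1r subr0 /a subrK.
    have zS' : z \in S :\ x by rewrite !inE zx.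
    by rewrite le_x_y // vdown // addrC subrK.
  by rewrite -sum_in_pred_true sum_v' sum_in_pred_true vsum addrC subrK.
pose v' w := v w + (w == y)%:R * v x.
have sum_v' P :
    P x = P y -> \sum_(w in S :\ x | P w) v' w = \sum_(w in S | P w) v w.
  move=> Pxy; rewrite big_split /= sum_delta_pred // (sum_setD1_pred _ _ xS).
  by rewrite Pxy addrC.
exists v' => [z zS'|]; first by rewrite sum_v' ?vdown ?le_x_y //; case/setD1P: zS'.
by rewrite -sum_in_pred_true sum_v' // sum_in_pred_true.
Qed.

End BeatInvariance.

(** * Cores *)

Definition deformation_retraction (T : finType) (le : rel T) (C : {set T})
    (r : T -> T) :=
  [/\ {homo r : x y / le x y}, forall x, r x \in C, {in C, forall x, r x = x}
    & fence le le r id].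

Section Cores.
Variables (T : finType) (le : rel T).
Hypotheses (le_refl : reflexive le) (le_anti : antisymmetric le)
  (le_trans : transitive le).

Definition collapse (x y t : T) := if t == x then y else t.

Section Collapse.
Variables (S : {set T}) (x y : T).

Lemma collapse_down_homo :
  down_beat le S x y -> {in S &, {homo collapse x y : a b / le a b}}.
Proof.
case=> _ _ _ ylex below_x a b aS bS; rewrite /collapse.
have [-> {a aS}|ax] := eqVneq a x; have [-> {b bS}|bx] := eqVneq b x => //.
- exact: le_trans.
- exact: below_x.
Qed.

Lemma collapse_up_homo :
  up_beat le S x y -> {in S &, {homo collapse x y : a b / le a b}}.
Proof.
case=> _ _ _ xley above_x a b aS bS; rewrite /collapse.
have [-> {a aS}|ax] := eqVneq a x; have [-> {b bS}|bx] := eqVneq b x => //.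
- exact: above_x.
- by move/le_trans; apply.
Qed.

Lemma deformation_retraction_beat r :
  deformation_retraction le S r -> down_beat le S x y \/ up_beat le S x y ->
  deformation_retraction le (S :\ x) (fun t => collapse x y (r t)).
Proof.
move=> [r_homo rS r_id r_fence] xy_beat.
have [yS yx] : y \in S /\ y != x by case: xy_beat => -[].
have c_homo : {in S &, {homo collapse x y : a b / le a b}}.
  by case: xy_beat; [apply: collapse_down_homo | apply: collapse_up_homo].
have cr_homo : {homo (fun t => collapse x y (r t)) : a b / le a b}.
  by move=> a b ab; apply: c_homo; [apply: rS | apply: rS | apply: r_homo].
split=> //.
- by move=> t; rewrite /collapse; case: ifP => [_|/negbT rtx]; rewrite !inE ?yx ?rtx ?rS.
- by move=> t /setD1P[tx tS]; rewrite r_id // /collapse (negbTE tx).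
apply: rt_trans r_fence; apply: rt_step; split=> //.
rewrite /collapse; case: xy_beat => -[_ _ _ yx_le _]; [left|right] => t /=;
  by case: eqP => [->|_].
Qed.

End Collapse.

Lemma euler_one_beat (R : pzRingType) (S : {set T}) x y :
  down_beat le S x y \/ up_beat le S x y ->
  euler_one R le (S :\ x) <-> euler_one R le S.
Proof. by case; [apply: euler_one_down_beat | apply: euler_one_up_beat]. Qed.

Lemma exists_core_in (R : pzRingType) (S : {set T}) r :
  deformation_retraction le S r -> exists C r',
  [/\ deformation_retraction le C r', beat_free le C
    & euler_one R le C <-> euler_one R le S].
Proof.
elim: {S}_.+1 {-2}S (ltnSn #|S|) r => // n IH S S_lt r r_def.
have [[x [y xy_beat]]|no_beat] :=
  classic (exists x y, down_beat le S x y \/ up_beat le S x y); last first.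
  by exists S, r; split=> // x y; split=> xy_beat; apply: no_beat; exists x, y; auto.
have xS : x \in S by case: xy_beat => -[].
have [|C [r' [r'_def nbC eulerC]]] :=
  IH (S :\ x) _ _ (deformation_retraction_beat r_def xy_beat).
  by move: S_lt; rewrite (cardsD1 x S) xS add1n ltnS.
by exists C, r'; split=> //; apply: iff_trans eulerC (euler_one_beat R xy_beat).
Qed.

Lemma exists_core (R : pzRingType) : exists C r,
  [/\ deformation_retraction le C r, beat_free le C
    & euler_one R le C <-> euler_one R le setT].
Proof.
apply: (@exists_core_in R setT id).
by split=> [a b|a|a|]; rewrite ?in_setT //; apply: rt_refl.
Qed.

End Cores.

Section CoreFixed.
Variables (T : finType) (le : rel T).
Hypotheses (le_refl : reflexive le) (le_anti : antisymmetric le)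
  (le_trans : transitive le).
Variables (C : {set T}) (r : T -> T).
Hypotheses (nbC : beat_free le C) (r_homo : {homo r : x y / le x y})
  (rC : forall x, r x \in C).

Lemma fence_retraction_fixed k l : fence le le k l ->
  {in C, forall x, r (k x) = x} <-> {in C, forall x, r (l x) = x}.
Proof.
have step k' l' : comparable_homs le le k' l' ->
    {in C, forall x, r (l' x) = x} -> {in C, forall x, r (k' x) = x}.
  move=> [k'_homo _ cmp] l'_fixed.
  apply: beat_free_comparable_fixed => // [x y _ _ /k'_homo/r_homo //|].
  by case: cmp => c; [left|right] => x xC; have := r_homo (c x); rewrite l'_fixed.
elim=> [k' l' cmp|k'|k' m l' _ IHkm _ IHml].
- by split; apply: step; [apply: comparable_homsC|].
- by [].
- by rewrite IHkm.
Qed.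

End CoreFixed.

Lemma core_fixed (A B : finType) (leA : rel A) (leB : rel B) (CA : {set A})
    (rA : A -> A) (rB : B -> B) (p : A -> B) (q : B -> A) :
  reflexive leA -> antisymmetric leA -> transitive leA ->
  deformation_retraction leA CA rA -> beat_free leA CA ->
  {homo p : x y / leA x y >-> leB x y} -> {homo q : x y / leB x y >-> leA x y} ->
  fence leB leB rB id -> fence leA leA (q \o p) id ->
  {in CA, forall x, rA (q (rB (p x))) = x}.
Proof.
move=> leA_refl leA_anti leA_trans [rA_homo rAC rA_id _] nbA p_homo q_homo.
move=> rB_fence qp_fence.
have qrBp_fence : fence leA leA (q \o rB \o p) id.
  exact: rt_trans (fence_comp p_homo q_homo rB_fence) qp_fence.
by apply/(fence_retraction_fixed leA_refl leA_anti leA_trans nbA rA_homo rAC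
  qrBp_fence).
Qed.

Lemma fence_equivalent_euler_one (R : pzRingType) (X Y : finType)
    (leX : rel X) (leY : rel Y) (f : X -> Y) (g : Y -> X) :
  reflexive leX -> antisymmetric leX -> transitive leX ->
  reflexive leY -> antisymmetric leY -> transitive leY ->
  {homo f : x y / leX x y >-> leY x y} -> {homo g : x y / leY x y >-> leX x y} ->
  fence leX leX (g \o f) id -> fence leY leY (f \o g) id ->
  euler_one R leX setT <-> euler_one R leY setT.
Proof.
move=> reflX antiX transX reflY antiY transY f_homo g_homo gf_fence fg_fence.
have [CX [rX [rX_def nbX eulerX]]] := exists_core reflX antiX transX R.
have [CY [rY [rY_def nbY eulerY]]] := exists_core reflY antiY transY R.
have [rX_homo rXC _ rX_fence] := rX_def; have [rY_homo rYC _ rY_fence] := rY_def.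
pose F x := rY (f x); pose G y := rX (g y).
have GF := core_fixed reflX antiX transX rX_def nbX f_homo g_homo rY_fence gf_fence.
have FG := core_fixed reflY antiY transY rY_def nbY g_homo f_homo rX_fence fg_fence.
have F_homo : {homo F : x y / leX x y >-> leY x y} by move=> x y /f_homo/rY_homo.
have G_homo : {homo G : x y / leY x y >-> leX x y} by move=> x y /g_homo/rX_homo.
have FC : {in CX, forall x, F x \in CY} by move=> x _; apply: rYC.
have GC : {in CY, forall y, G y \in CX} by move=> y _; apply: rXC.
rewrite -eulerX -eulerY; split; first exact: (euler_one_iso (F := F) (G := G)).
exact: (euler_one_iso (F := G) (G := F)).
Qed.

(** * The rank of the matrix X_M *)

Section IncidenceRank.
Variables (F : fieldType) (n : nat) (le : rel 'I_n).
Hypotheses (le_refl : reflexive le) (le_anti : antisymmetric le)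
  (le_trans : transitive le).

Definition zeta_mx : 'M[F]_n := \matrix_(i, j) (le i j)%:R.

Definition nle_mx : 'M[F]_n := \matrix_(i, j) (if le i j then 0 else 1).

Lemma mul_row_zeta_mx (u : 'rV[F]_n) j :
  (u *m zeta_mx) 0 j = \sum_(i | le i j) u 0 i.
Proof.
rewrite !mxE [RHS]big_mkcond; apply: eq_bigr => i _.
by rewrite mxE; case: (le i j); rewrite ?mulr1 ?mulr0.
Qed.

Lemma mul_row_nle_mx (u : 'rV[F]_n) j :
  (u *m nle_mx) 0 j = \sum_i u 0 i - \sum_(i | le i j) u 0 i.
Proof.
rewrite mxE [X in X - _](bigID (le^~ j)) /= addrAC subrr add0r [RHS]big_mkcond.
by apply: eq_bigr => i _; rewrite mxE; case: (le i j); rewrite ?mulr1 ?mulr0.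
Qed.

Lemma zeta_mx_free : row_free zeta_mx.
Proof.
apply: inj_row_free => u u_ker; apply/rowP => j; rewrite mxE.
elim/(poset_ind le_refl le_anti le_trans): j => j IH.
have := mul_row_zeta_mx u j; rewrite u_ker mxE (bigD1 j) //= big1 ?addr0 //.
by move=> i /andP[ilej ij]; apply: IH.
Qed.

Lemma rank_nle_mx_ge : (n <= (\rank nle_mx).+1)%N.
Proof.
have zetaE : zeta_mx = (const_mx 1 : 'cV_n) *m (const_mx 1 : 'rV_n) - nle_mx.
  apply/matrixP => i j; rewrite !mxE big_ord1 !mxE mulr1.
  by case: (le i j); rewrite ?subr0 ?subrr.
rewrite -{1}(eqP zeta_mx_free) zetaE; apply: leq_trans (mxrank_add _ _) _.
rewrite mxrank_opp -[(\rank _).+1]add1n leq_add2r.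
exact: leq_trans (mxrankM_maxl _ _) (rank_leq_col _).
Qed.

Lemma row_free_nle_mx : row_free nle_mx <-> ~ euler_one F le setT.
Proof.
rewrite euler_oneT; split=> [nle_free [v vdown vsum]|not_euler].
  pose u := \row_i v i.
  have u_ker : u *m nle_mx = 0.
    apply/rowP => j; rewrite mul_row_nle_mx /u mxE.
    under eq_bigr do rewrite mxE; under [X in _ - X]eq_bigr do rewrite mxE.
    by rewrite vdown vsum subrr.
  have u0 : u = 0 by apply/eqP; rewrite -(mulmx_free_eq0 u nle_free) u_ker.
  move: vsum; rewrite big1 => [/esym/eqP|i _]; first by rewrite oner_eq0.
  by have /rowP/(_ i) := u0; rewrite !mxE.
apply: inj_row_free => u u_ker.
have down_sum j : \sum_(i | le i j) u 0 i = \sum_i u 0 i.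
  by apply/eqP; rewrite eq_sym -subr_eq0 -mul_row_nle_mx u_ker mxE.
have [sum0|sum_neq0] := eqVneq (\sum_i u 0 i) 0.
  apply/eqP; rewrite -(mulmx_free_eq0 _ zeta_mx_free); apply/eqP/rowP => j.
  by rewrite mul_row_zeta_mx down_sum sum0 mxE.
case: not_euler; exists (fun i => u 0 i / \sum_i u 0 i) => [j|];
  by rewrite -mulr_suml ?down_sum divff.
Qed.

End IncidenceRank.

Section SpecializationOrder.
Variables (T : finType) (O : {set {set T}}).

Lemma mem_minimal_open x : x \in minimal_open O x.
Proof. by apply/bigcapP => U /andP[]. Qed.

Lemma minimal_open_min x U : U \in O -> x \in U -> minimal_open O x \subset U.
Proof. by move=> UO xU; apply: bigcap_inf; rewrite UO xU. Qed.

Lemma minimal_open_open x : is_topology O -> minimal_open O x \in O.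
Proof. by case=> _ OT _ OI; apply: (big_ind (fun U => U \in O)) => // U /andP[]. Qed.

Lemma fleE x y : is_topology O -> fle O x y = (x \in minimal_open O y).
Proof.
move=> topO; apply/idP/idP => [/subsetP xy|]; first exact/xy/mem_minimal_open.
by apply: minimal_open_min; apply: minimal_open_open.
Qed.

Lemma fle_refl : reflexive (fle O).
Proof. by move=> x; apply: subxx. Qed.

Lemma fle_trans : transitive (fle O).
Proof. by move=> y x z; apply: subset_trans. Qed.

Lemma fle_anti : is_T0 O -> antisymmetric (fle O).
Proof.
move=> T0O x y /andP[/subsetP xy /subsetP yx]; apply/eqP/negPn/negP => /T0O[U UO].
have [xU|xNU] := boolP (x \in U); have [yU|yNU] := boolP (y \in U) => // _.
- case/negP: yNU; apply: (subsetP (minimal_open_min UO xU)).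
  exact/yx/mem_minimal_open.
- case/negP: xNU; apply: (subsetP (minimal_open_min UO yU)).
  exact/xy/mem_minimal_open.
Qed.

End SpecializationOrder.

Section Rankbar.
Variables (R : realType) (T : finType) (O : {set {set T}}).
Hypothesis T0O : is_T0 O.

Let le_enum (i j : 'I_#|T|) := fle O (enum_val i) (enum_val j).

Let le_enum_refl : reflexive le_enum.
Proof. by move=> i; apply: fle_refl. Qed.

Let le_enum_anti : antisymmetric le_enum.
Proof. by move=> i j /(fle_anti T0O)/enum_val_inj. Qed.

Let le_enum_trans : transitive le_enum.
Proof. by move=> j i k; apply: fle_trans. Qed.

Lemma rankbar_le1 : (rankbar R O <= 1)%N.
Proof.
rewrite /rankbar leq_subLR addn1.
exact: (rank_nle_mx_ge R le_enum_refl le_enum_anti le_enum_trans).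
Qed.

Lemma rankbar_eq1 : rankbar R O = 1%N <-> euler_one R (fle O) setT.
Proof.
have [free_noeuler noeuler_free] :=
  row_free_nle_mx R le_enum_refl le_enum_anti le_enum_trans.
have := rank_nle_mx_ge R le_enum_refl le_enum_anti le_enum_trans.
have := rank_leq_row (nle_mx R le_enum).
rewrite -euler_one_enum /rankbar (_ : XM R O = nle_mx R le_enum) //.
split=> [rk1|euler]; first by apply: NNPP => /noeuler_free; rewrite /row_free; lia.
have /negP : ~ row_free (nle_mx R le_enum) by move/free_noeuler.
rewrite /row_free; lia.
Qed.

End Rankbar.

(** * Homotopies of finite spaces are fences *)

Lemma finite_common_radius (R : realDomainType) (X : finType) (P : X -> R -> Prop) :
  (forall x e e', 0 < e' -> e' <= e -> P x e -> P x e') ->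
  (forall x, exists2 e, 0 < e & P x e) -> exists2 e : R, 0 < e & forall x, P x e.
Proof.
move=> P_shrink P_some.
suff [e e0 Pe] : exists2 e : R, 0 < e & forall x, x \in enum X -> P x e.
  by exists e => // x; apply: Pe; rewrite mem_enum.
elim: (enum X) => [|a s [e e0 Pe]]; first by exists 1.
have [ea ea0 Pa] := P_some a.
have min_gt0 : 0 < Order.min e ea by rewrite lt_min e0 ea0.
exists (Order.min e ea) => // x; rewrite inE => /orP[/eqP->|xs].
  by apply: P_shrink Pa; rewrite ?ge_min ?lexx ?orbT.
by apply: P_shrink (Pe x xs); rewrite ?ge_min ?lexx.
Qed.

Lemma unit_interval_chain (R : realType) (r : R -> R -> Prop) :
  (forall c, 0 <= c <= 1 -> exists2 e : R, 0 < e &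
     forall t, 0 <= t <= 1 -> `|t - c| < e -> r t c /\ r c t) ->
  clos_refl_trans r 0 1.
Proof.
move=> r_near.
pose A t := 0 <= t <= 1 /\ clos_refl_trans r 0 t.
have A0 : A 0 by split; [rewrite lexx ler01 | apply: rt_refl].
have supA : classical_sets.has_sup A by split; [exists 0 | exists 1 => t [/andP[]]].
have c01 : 0 <= sup A <= 1.
  by rewrite (sup_upper_bound supA A0) ge_sup //; [exists 0 | move=> t [/andP[]]].
have [e e0 near_c] := r_near _ c01.
have [a [a01 r0a] lt_a] := sup_adherent e0 supA.
have le_a : a <= sup A by apply: sup_upper_bound.
have Ac : A (sup A).
  split=> //; apply: rt_trans r0a (rt_step (proj1 (near_c a a01 _))).
  by rewrite ler0_norm ?subr_le0 //; lra.
suff c1 : sup A = 1 by case: Ac; rewrite c1.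
apply/eqP; rewrite eq_le (andP c01).2 /= leNgt; apply/negP => lt_c1.
pose t := Order.min (sup A + e / 2) 1.
have t01 : 0 <= t <= 1 by rewrite le_min ge_min lexx orbT andbT; lra.
have lt_ct : sup A < t by rewrite lt_min lt_c1 andbT; lra.
have At : A t.
  split=> //; apply: rt_trans (proj2 Ac) (rt_step (proj2 (near_c t t01 _))).
  rewrite gtr0_norm ?subr_gt0 //; have : t <= sup A + e / 2 by rewrite ge_min lexx.
  lra.
by have := sup_upper_bound supA At; rewrite leNgt lt_ct.
Qed.

Section FiniteSpaceMaps.
Variables (X Y : finType) (OX : {set {set X}}) (OY : {set {set Y}}).
Hypothesis topY : is_topology OY.

Lemma continuous_homo f :
  continuousF OX OY f -> {homo f : x y / fle OX x y >-> fle OY x y}.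
Proof.
move=> f_cont x y /subsetP xy; rewrite fleE //.
have V_open := f_cont _ (minimal_open_open (f y) topY).
have yV : y \in f @^-1: minimal_open OY (f y) by rewrite inE mem_minimal_open.
have /subsetP/(_ x) := minimal_open_min V_open yV; rewrite inE; apply.
exact/xy/mem_minimal_open.
Qed.

Variables (R : realType) (H : X -> R -> Y).
Hypothesis H_cont : continuousH OX OY H.

Lemma homotopy_slice_homo t :
  0 <= t <= 1 -> {homo H^~ t : x y / fle OX x y >-> fle OY x y}.
Proof.
move=> t01 x y /subsetP xy; rewrite fleE //.
have [U UO [yU [e e0 near_y]]] :=
  H_cont (minimal_open_open (H y t) topY) t01 (mem_minimal_open _ _).
apply: near_y; rewrite ?subrr ?normr0 //.
by apply: (subsetP (minimal_open_min UO yU)); apply/xy/mem_minimal_open.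
Qed.

Lemma homotopy_locally_below t : 0 <= t <= 1 -> exists2 e : R, 0 < e &
  forall x t', 0 <= t' <= 1 -> `|t' - t| < e -> fle OY (H x t') (H x t).
Proof.
move=> t01; apply: (finite_common_radius (P := fun x e => forall t',
    0 <= t' <= 1 -> `|t' - t| < e -> fle OY (H x t') (H x t))) => [|x].
  move=> x e e' _ le_e' near_x t' t'01 lt_e'.
  by apply: near_x => //; apply: lt_le_trans le_e'.
have [U UO [xU [e e0 near_x]]] :=
  H_cont (minimal_open_open (H x t) topY) t01 (mem_minimal_open _ _).
by exists e => // t' t'01 lt_e; rewrite fleE //; apply: near_x.
Qed.

End FiniteSpaceMaps.

Lemma homotopic_fence (R : realType) (X Y : finType) (OX : {set {set X}})
    (OY : {set {set Y}}) (f g : X -> Y) :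
  is_topology OY -> homotopic R OX OY f g -> fence (fle OX) (fle OY) f g.
Proof.
move=> topY [H [H_cont H0 H1]].
pose h t x := H x t.
have h_homo t : 0 <= t <= 1 -> {homo h t : x y / fle OX x y >-> fle OY x y}.
  exact: homotopy_slice_homo.
have h_fence : fence (fle OX) (fle OY) (h 0) (h 1).
  apply: (clos_refl_trans_map (F := h) (fun s t (hst : comparable_homs _ _ _ _) => hst)).
  apply: unit_interval_chain => c c01.
  have [e e0 below] := homotopy_locally_below topY H_cont c01.
  exists e => // t t01 lt_e; have below_t x := below x t t01 lt_e.
  by split; (split; [exact: h_homo | exact: h_homo |]); [left|right].
have h0_homo : {homo h 0 : x y / fle OX x y >-> fle OY x y}.
  by apply: h_homo; rewrite lexx ler01.
have h1_homo : {homo h 1 : x y / fle OX x y >-> fle OY x y}.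
  by apply: h_homo; rewrite lexx ler01.
apply: rt_trans (rt_step _) (rt_trans h_fence (rt_step _)).
  exact/comparable_homsC/(comparable_homs_eqfun (@fle_refl _ _) h0_homo H0).
exact: comparable_homs_eqfun (@fle_refl _ _) h1_homo H1.
Qed.

Lemma homotopy_equivalent_euler_one (R : realType) (X Y : finType)
    (OX : {set {set X}}) (OY : {set {set Y}}) :
  finT0space OX -> finT0space OY -> homotopy_equivalent R OX OY ->
  euler_one R (fle OX) setT <-> euler_one R (fle OY) setT.
Proof.
move=> [topX T0X] [topY T0Y] [f [g [f_cont g_cont gf_id fg_id]]].
apply: (fence_equivalent_euler_one R (fle_refl OX) (fle_anti T0X) (@fle_trans _ OX)
  (fle_refl OY) (fle_anti T0Y) (@fle_trans _ OY)).
- exact: continuous_homo f_cont.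
- exact: continuous_homo g_cont.
- exact: homotopic_fence gf_id.
- exact: homotopic_fence fg_id.
Qed.

Theorem mainTheorem8 (R : realType) (X Y : finType)
  (OX : {set {set X}}) (OY : {set {set Y}}) :
  finT0space OX -> finT0space OY ->
  homotopy_equivalent R OX OY ->
  rankbar R OX = rankbar R OY.
Proof.
move=> spX spY XY; have [_ T0X] := spX; have [_ T0Y] := spY.
have := homotopy_equivalent_euler_one spX spY XY.
rewrite -!rankbar_eq1 //; move: (rankbar_le1 R T0X) (rankbar_le1 R T0Y); lia.
Qed.
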